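(* Let $n\ge 2$. If a nontrivial periodic braid $X\in B_n$ is given as a word of length $l$ in the generators $\sigma_1,\ldots,\sigma_{n-1}$ and their inverses, then $l\ge n-1$.
   Context: $B_n$ is Artin's braid group with generators $\sigma_1,\ldots,\sigma_{n-1}$ and relations $\sigma_i\sigma_j=\sigma_j\sigma_i$ ($|i-j|>1$), $\sigma_i\sigma_j\sigma_i=\sigma_j\sigma_i\sigma_j$ ($|i-j|=1$). $\Delta^2$, the square of $\Delta=\sigma_1(\sigma_2\sigma_1)\cdots(\sigma_{n-1}\cdots\sigma_1)$, generates the center. A braid is periodic if some nonzero power of it is a power of $\Delta^2$. *)

(* Artin braid group B_n presented by generators and relations:
   elements are words in sigma_i^{+-1} (1 <= i <= n-1) modulo the congruence
   generated by free cancellation and the braid relations. *)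
From mathcomp Require Import all_boot all_order all_algebra.
Set Implicit Arguments. Unset Strict Implicit. Unset Printing Implicit Defensive.

(* A letter (i, true) is sigma_i, (i, false) is sigma_i^{-1}. *)
Definition letter := (nat * bool)%type.
Definition bword := seq letter.

Definition gen_ok (n i : nat) : bool := (0 < i) && (i < n).

Definition word_ok (n : nat) (w : bword) : bool := all (fun a => gen_ok n a.1) w.

Definition sig (i : nat) : letter := (i, true).

Inductive braid_rel (n : nat) : bword -> bword -> Prop :=
| rel_cancel i b : gen_ok n i -> braid_rel n [:: (i, b); (i, ~~ b)] [::]
| rel_comm i j : gen_ok n i -> gen_ok n j -> (j.+1 < i) || (i.+1 < j) ->
    braid_rel n [:: sig i; sig j] [:: sig j; sig i]
| rel_braid i j : gen_ok n i -> gen_ok n j -> (j == i.+1) || (i == j.+1) ->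
    braid_rel n [:: sig i; sig j; sig i] [:: sig j; sig i; sig j].

Inductive braid_eq (n : nat) : bword -> bword -> Prop :=
| beq_rel u l r v : braid_rel n l r -> braid_eq n (u ++ l ++ v) (u ++ r ++ v)
| beq_refl w : braid_eq n w w
| beq_sym w1 w2 : braid_eq n w1 w2 -> braid_eq n w2 w1
| beq_trans w1 w2 w3 : braid_eq n w1 w2 -> braid_eq n w2 w3 -> braid_eq n w1 w3.

Definition winv (w : bword) : bword := rev [seq (a.1, ~~ a.2) | a <- w].

Definition wpow (w : bword) (k : int) : bword :=
  match k with
  | Posz m => flatten (nseq m w)
  | Negz m => flatten (nseq m.+1 (winv w))
  end.

(* Delta = sigma_1 (sigma_2 sigma_1) ... (sigma_{n-1} ... sigma_1) *)
Definition Delta (n : nat) : bword :=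
  flatten [seq [seq sig i | i <- rev (iota 1 j)] | j <- iota 1 n.-1].

Definition Delta2 (n : nat) : bword := Delta n ++ Delta n.

Definition periodic (n : nat) (X : bword) : Prop :=
  exists (k m : int), k != 0 /\ braid_eq n (wpow X k) (wpow (Delta2 n) m).

From mathcomp Require Import all_boot all_order all_algebra.
From Stdlib Require Import Setoid FunctionalExtensionality.
From mathcomp Require Import zify.
Set Implicit Arguments. Unset Strict Implicit. Unset Printing Implicit Defensive.

(* If X has fewer than n-1 letters, some sigma_j does not occur in it.  Colour
   the strands at positions <= j and > j differently and count, with signs,
   the crossings of differently coloured strands: the count is invariant under
   the braid relations, vanishes on every power of X, and vanishes on no
   nonzero power of Delta^2, a word of constant sign containing sigma_j.  So
   X^k = 1 for some k <> 0, and X = 1 because B_n is torsion-free.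

   Torsion-freeness goes through Garside theory.  The positive braid monoid is
   cancellative and has least common multiples (Dehornoy's word reversing,
   whose cube condition is checked by computation); every braid word is
   Delta^-2r P with P positive, and Delta^2 is central.  If P^K = D^K with D
   commuting with P, left multiplication by P and by D maps the family
   P^i D^(K-i) onto itself up to a cyclic shift, so P c = D c for the lcm c of
   the family, whence P = D. *)

(** * Positive Artin monoids *)

Definition pword := seq nat.

(* A kind function [t] says, for two generators, whether they are equal (0),
   satisfy the braid relation [aba = bab] (1), or commute (2); [prel t] lists
   the defining relations of the corresponding positive (Artin) monoid. *)
Inductive prel (t : nat -> nat -> nat) : pword -> pword -> Prop :=
| prel_comm a b : t a b = 2 -> prel t [:: a; b] [:: b; a]
| prel_braid a b : t a b = 1 -> prel t [:: a; b; a] [:: b; a; b].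

Definition pstep t (u v : pword) :=
  exists p l r s, [/\ u = p ++ l ++ s, v = p ++ r ++ s & prel t l r].

Inductive pconv t : pword -> pword -> Prop :=
| pconv_refl u : pconv t u u
| pconv_step u v w : pstep t u v -> pconv t v w -> pconv t u w.

Section PositiveMonoid.
Variable t : nat -> nat -> nat.

Lemma pconv_trans u v w : pconv t u v -> pconv t v w -> pconv t u w.
Proof. by elim=> // {}u {}v w' uv _ IH /IH; apply: pconv_step. Qed.

Lemma pconv1 u v : pstep t u v -> pconv t u v.
Proof. by move=> uv; apply: pconv_step uv (pconv_refl _ _). Qed.

Lemma pconv_rel u l r v : prel t l r -> pconv t (u ++ l ++ v) (u ++ r ++ v).
Proof. by move=> lr; apply: pconv1; exists u, l, r, v. Qed.

Lemma pconv_rel1 l r : prel t l r -> pconv t l r.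
Proof. by move=> lr; have := pconv_rel [::] [::] lr; rewrite /= !cats0. Qed.

Lemma pconv_ctx x y u v : pconv t u v -> pconv t (x ++ u ++ y) (x ++ v ++ y).
Proof.
elim=> [w|{}u {}v w [p [l [r [s [-> -> lr]]]]] _ IH]; first exact: pconv_refl.
by apply: pconv_step IH; exists (x ++ p), l, r, (s ++ y); rewrite !catA.
Qed.

Lemma prel_size l r : prel t l r -> size l = size r.
Proof. by case. Qed.

Lemma pconv_size u v : pconv t u v -> size u = size v.
Proof.
by elim=> // {}u {}v w [p [l [r [s [-> -> /prel_size lr]]]]] _ <-; rewrite !size_cat lr.
Qed.

Lemma prel_all (P : pred nat) l r : prel t l r -> all P l = all P r.
Proof. by case=> a b _ /=; rewrite !andbT; case: (P a); case: (P b). Qed.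

Lemma pconv_all (P : pred nat) u v : pconv t u v -> all P u = all P v.
Proof.
by elim=> // {}u {}v w [p [l [r [s [-> -> /(prel_all P) lr]]]]] _ <-; rewrite !all_cat lr.
Qed.

Hypothesis t_sym : forall a b, t a b = t b a.

Lemma prel_sym l r : prel t l r -> prel t r l.
Proof. by case=> a b E; constructor; rewrite t_sym. Qed.

Lemma pconv_sym u v : pconv t u v -> pconv t v u.
Proof.
elim=> [w|{}u {}v w [p [l [r [s [-> -> lr]]]]] _ IH]; first exact: pconv_refl.
exact: pconv_trans IH (pconv_rel _ _ (prel_sym lr)).
Qed.

Lemma pconv_rev u v : pconv t u v -> pconv t (rev u) (rev v).
Proof.
elim=> [w|{}u {}v w [p [l [r [s [-> -> lr]]]]] _ IH]; first exact: pconv_refl.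
apply: pconv_trans IH; rewrite !rev_cat -!catA; apply: pconv_rel.
by case: lr => a b E; constructor; rewrite // t_sym.
Qed.

End PositiveMonoid.

Lemma pconv_map t1 t2 (g : nat -> nat) u v :
  (forall a b, t2 (g a) (g b) = t1 a b) -> pconv t1 u v -> pconv t2 (map g u) (map g v).
Proof.
move=> tg; elim=> [w|{}u {}v w [p [l [r [s [-> -> lr]]]]] _ IH]; first exact: pconv_refl.
apply: pconv_trans IH; rewrite !map_cat; apply: pconv_rel.
by case: lr => a b E; constructor; rewrite tg.
Qed.

(** * Word reversing and the cube condition *)

Fixpoint pneighbours t (u : pword) : seq pword :=
  if u is a :: u' then
    let here :=
      if u' is b :: u'' then
        (if t a b == 2 then [:: b :: a :: u''] else [::]) ++
        (if u'' is a' :: u3 then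
           if (t a b == 1) && (a' == a) then [:: b :: a :: b :: u3] else [::]
         else [::])
      else [::] in
    here ++ map (cons a) (pneighbours t u')
  else [::].

Fixpoint pball t (k : nat) (S : seq pword) : seq pword :=
  if k is k'.+1 then pball t k' (undup (S ++ flatten (map (pneighbours t) S))) else S.

Lemma pneighbours_step t u w : w \in pneighbours t u -> pstep t u w.
Proof.
elim: u w => [|a u IH] w //=; rewrite mem_cat => /orP[].
  case: u {IH} => [|b u''] //; rewrite mem_cat => /orP[].
    case: ifP => // /eqP E; rewrite inE => /eqP->.
    by exists [::], [:: a; b], [:: b; a], u''; split => //; constructor.
  case: u'' => [|a' u3] //; case: ifP => // /andP[/eqP E /eqP->].
  rewrite inE => /eqP->.
  by exists [::], [:: a; b; a], [:: b; a; b], u3; split => //; constructor.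
move=> /mapP[w' /IH [p [l [r [s [-> -> lr]]]]] ->].
by exists (a :: p), l, r, s.
Qed.

Lemma pball_conv t k S w : w \in pball t k S -> exists2 s, s \in S & pconv t s w.
Proof.
elim: k S => [|k IH] S /=; first by exists w => //; apply: pconv_refl.
move=> /IH [s']; rewrite mem_undup mem_cat => /orP[] Ss' s'w; first by exists s'.
move: Ss' => /flattenP [ns /mapP [s Ss ->] /pneighbours_step ss'].
by exists s => //; apply: pconv_step ss' s'w.
Qed.

(* [a :: cpl t a b] is the least common right multiple of [a] and [b]. *)
Definition cpl t (a b : nat) : pword :=
  if t a b == 0 then [::] else if t a b == 1 then [:: b; a] else [:: b].

Lemma cpl_map t1 t2 (g : nat -> nat) a b :
  (forall a b, t2 (g a) (g b) = t1 a b) -> cpl t2 (g a) (g b) = map g (cpl t1 a b).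
Proof. by move=> tg; rewrite /cpl tg; case: ifP => //; case: ifP. Qed.

(* Dehornoy's right reversing of [u^-1 v] into [u' v'^-1]: when it terminates,
   every common right multiple [u s = v t] factors through [u u' = v v']. *)
Fixpoint reversing t (fuel : nat) (u v : pword) : option (pword * pword) :=
  if fuel is fuel'.+1 then
  match u, v with
  | [::], _ => Some (v, [::])
  | _, [::] => Some ([::], u)
  | x :: u', y :: v' =>
    match reversing t fuel' u' (cpl t x y), reversing t fuel' v' (cpl t y x) with
    | Some (a1, b1), Some (a2, b2) =>
      if reversing t fuel' b1 b2 is Some (a3, b3) then Some (a1 ++ a3, a2 ++ b3)
      else None
    | _, _ => None
    end
  end else None.

Lemma reversing_map t1 t2 (g : nat -> nat) fuel u v :
  (forall a b, t2 (g a) (g b) = t1 a b) ->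
  reversing t2 fuel (map g u) (map g v) =
  omap (fun p => (map g p.1, map g p.2)) (reversing t1 fuel u v).
Proof.
move=> tg; elim: fuel u v => [|fuel IH] [|x u'] [|y v'] //=.
rewrite !(cpl_map _ _ tg) !IH.
case: (reversing t1 fuel u' (cpl t1 x y)) => [[a1 b1]|] //=.
case: (reversing t1 fuel v' (cpl t1 y x)) => [[a2 b2]|] //=.
by rewrite IH; case: (reversing t1 fuel b1 b2) => [[a3 b3]|] //=; rewrite !map_cat.
Qed.

(* Kinds on the generators 0, 1, 2 (larger ones count as 2) making the pairs
   {0,1}, {1,2}, {0,2} of kinds [k.1.1], [k.1.2], [k.2]. *)
Definition tri_kind (k : nat * nat * nat) (a b : nat) : nat :=
  let a' := minn a 2 in let b' := minn b 2 in
  if a' == b' then 0 else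
  if a' + b' == 1 then k.1.1 else if a' + b' == 3 then k.1.2 else k.2.

(* The cube condition for the generators 0, 1, 2, with a bounded search for the
   closing word.  It only depends on the kinds of the three pairs, so checking
   the seven kind triples realised by distinct braid generators proves it for
   all of them (cube_condition). *)
Definition cube_ok (k : nat * nat * nat) : bool :=
  let t := tri_kind k in
  if reversing t 30 (cpl t 1 2) (cpl t 1 0) is Some (cu, cv) then
    has (fun w => (take (size (cpl t 0 2)) w == cpl t 0 2) &&
      (cpl t 2 0 ++ drop (size (cpl t 0 2)) w \in pball t 12 [:: cpl t 2 1 ++ cu]))
      (pball t 12 [:: cpl t 0 1 ++ cv])
  else false.

Lemma cube_check :
  all cube_ok [:: (1, 1, 2); (1, 2, 1); (2, 1, 1); (1, 2, 2); (2, 1, 2); (2, 2, 1); (2, 2, 2)].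
Proof. by vm_compute. Qed.

(** * The positive braid monoid *)

Definition braid_kind (a b : nat) : nat :=
  if a == b then 0 else if (a.+1 == b) || (b.+1 == a) then 1 else 2.

Definition distant (a b : nat) : bool := (b.+1 < a) || (a.+1 < b).

Lemma braid_kindC a b : braid_kind a b = braid_kind b a.
Proof. by rewrite /braid_kind eq_sym orbC. Qed.

Lemma braid_kind_le2 a b : braid_kind a b <= 2.
Proof. by rewrite /braid_kind; case: ifP => //; case: ifP. Qed.

Lemma braid_kind_eq0 a b : (braid_kind a b == 0) = (a == b).
Proof. by rewrite /braid_kind; case: ifP => // _; case: ifP. Qed.

Lemma braid_kind_eq1 a b : (braid_kind a b == 1) = (a.+1 == b) || (b.+1 == a).
Proof.
rewrite /braid_kind; case: (a =P b) => [->|_]; last by case: ifP.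
by rewrite !(gtn_eqF (ltnSn b)).
Qed.

Lemma braid_kind_eq2 a b : (braid_kind a b == 2) = distant a b.
Proof.
rewrite /braid_kind /distant; case: (a =P b) => [->|ab]; first by rewrite !ltnNge !leqW.
by case: (a.+1 =P b) => [<-|?]; case: (b.+1 =P a) => [<-|?] /=; lia.
Qed.

Definition peq := pconv braid_kind.

Lemma peq_refl u : peq u u. Proof. exact: pconv_refl. Qed.
Lemma peq_sym u v : peq u v -> peq v u. Proof. exact: (pconv_sym braid_kindC). Qed.
Lemma peq_trans u v w : peq u v -> peq v w -> peq u w. Proof. exact: pconv_trans. Qed.
#[local] Hint Resolve peq_refl : core.

Add Parametric Relation : pword peq
  reflexivity proved by peq_refl
  symmetry proved by peq_sym
  transitivity proved by peq_trans as peq_rel.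

Add Parametric Morphism : (@cat nat) with signature peq ==> peq ==> peq as peq_cat.
Proof.
move=> x y xy u v uv; apply: peq_trans (_ : peq (y ++ u) _).
  by have := pconv_ctx [::] u xy.
by have := pconv_ctx y [::] uv; rewrite !cats0.
Qed.

Add Parametric Morphism (a : nat) : (cons a) with signature peq ==> peq as peq_cons.
Proof. by move=> x y xy; have := pconv_ctx [:: a] [::] xy; rewrite !cats0. Qed.

Lemma peq_comm a b : distant a b -> peq [:: a; b] [:: b; a].
Proof.
by move=> ab; apply: pconv_rel1; constructor; apply/eqP; rewrite braid_kind_eq2.
Qed.

Lemma peq_braid a : peq [:: a; a.+1; a] [:: a.+1; a; a.+1].
Proof. by apply: pconv_rel1; constructor; apply/eqP; rewrite braid_kind_eq1 eqxx. Qed.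

Lemma peq_comm_distant a w : all (distant a) w -> peq (a :: w) (w ++ [:: a]).
Proof.
elim: w => //= b w IH /andP[ab aw]; rewrite -(IH aw).
by rewrite -[[:: a, b & w]]/([:: a; b] ++ w) (peq_comm ab).
Qed.

Local Notation bcpl := (cpl braid_kind).

Lemma peq_lcm_gen x y : peq (x :: bcpl x y) (y :: bcpl y x).
Proof.
rewrite /cpl (braid_kindC y x).
case: (braid_kind x y =P 0) => [/eqP|k0]; first by rewrite braid_kind_eq0 => /eqP->.
have := braid_kind_le2 x y; case: (braid_kind x y =P 1) => [k1|k1] k2;
  apply: pconv_rel1; constructor => //; lia.
Qed.

Lemma bcpl_id x : bcpl x x = [::].
Proof. by rewrite /cpl /braid_kind eqxx. Qed.

Lemma bcpl_comm x y : braid_kind x y = 2 -> bcpl x y = [:: y].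
Proof. by rewrite /cpl => ->. Qed.

Lemma bcpl_braid x y : braid_kind x y = 1 -> bcpl x y = [:: y; x].
Proof. by rewrite /cpl => ->. Qed.

Definition pick3 (x y z a : nat) : nat := if a is 0 then x else if a is 1 then y else z.

Lemma pick3_kind x y z a b :
  braid_kind (pick3 x y z a) (pick3 x y z b) =
  tri_kind (braid_kind x y, braid_kind y z, braid_kind x z) a b.
Proof.
rewrite /tri_kind /=; case: a => [|[|a]]; case: b => [|[|b]] //=.
all: first [exact: braid_kindC | by rewrite /braid_kind eqxx].
Qed.

Lemma cube_condition x y z : x != y -> y != z -> x != z ->
  exists cu cv W, [/\ reversing braid_kind 30 (bcpl y z) (bcpl y x) = Some (cu, cv),
    peq (bcpl x y ++ cv) (bcpl x z ++ W) & peq (bcpl z y ++ cu) (bcpl z x ++ W)].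
Proof.
move=> xy yz xz; set k := (braid_kind x y, braid_kind y z, braid_kind x z).
have kind12 a b : a != b -> (braid_kind a b == 1) || (braid_kind a b == 2).
  by rewrite -braid_kind_eq0; have := braid_kind_le2 a b; case: braid_kind => [|[|[|]]].
have not_triangle : ~~ [&& braid_kind x y == 1, braid_kind y z == 1 & braid_kind x z == 1].
  by apply/negP; rewrite !braid_kind_eq1 => /and3P[] /orP[] /eqP ? /orP[] /eqP ? /orP[] /eqP ?; lia.
have k_ok : k \in [:: (1, 1, 2); (1, 2, 1); (2, 1, 1); (1, 2, 2);
    (2, 1, 2); (2, 2, 1); (2, 2, 2)].
  move: (kind12 _ _ xy) (kind12 _ _ yz) (kind12 _ _ xz) not_triangle; rewrite /k.
  by case/orP=> /eqP->; case/orP=> /eqP->; case/orP=> /eqP->.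
set g := pick3 x y z.
have gk a b : braid_kind (g a) (g b) = tri_kind k a b by apply: pick3_kind.
have gc a b : bcpl (g a) (g b) = map g (cpl (tri_kind k) a b) by apply: cpl_map.
rewrite -[x]/(g 0) -[y]/(g 1) -[z]/(g 2) !gc (@reversing_map _ _ g 30 _ _ gk).
have := allP cube_check k k_ok; rewrite /cube_ok.
case: (reversing _ 30 _ _) => [[cu cv]|] // /hasP[w /pball_conv[_ /[!inE] /eqP-> w_conv]].
set d := size _ => /andP[/eqP w_take /pball_conv[_ /[!inE] /eqP-> closing]].
exists (map g cu), (map g cv), (map g (drop d w)); split => //.
  have := pconv_map gk w_conv; rewrite map_cat => ->.
  by rewrite -{1}(cat_take_drop d w) w_take map_cat.
by have := pconv_map gk closing; rewrite !map_cat.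
Qed.

(** * Cancellativity *)

Definition gen_lcm_at m := forall x y a b, size a = m -> peq (x :: a) (y :: b) ->
  exists c, peq a (bcpl x y ++ c) /\ peq b (bcpl y x ++ c).

Definition gen_lcm_inv x a w := forall y b, w = y :: b ->
  exists c, peq a (bcpl x y ++ c) /\ peq b (bcpl y x ++ c).

(* Strong induction on [m]: walk along the relation chain from [x :: a] to
   [y :: b] keeping [gen_lcm_inv x a]; a relation at the front of the word is
   absorbed by the cube condition and reversing at smaller lengths. *)
Section GenLcmInduction.
Variable m : nat.
Hypothesis gen_lcm_lt : forall m', m' < m -> gen_lcm_at m'.

Lemma lcancel_le p e c : size (p ++ e) <= m -> peq (p ++ e) (p ++ c) -> peq e c.
Proof.
elim: p e c => [|z p IHp] e c //= lt_m pe_pc.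
have [c0 []] := gen_lcm_lt lt_m erefl pe_pc; rewrite bcpl_id /= => pe pc.
by apply: IHp (ltnW lt_m) _; rewrite pe pc.
Qed.

Lemma reversing_sound fuel u v cu cv :
  reversing braid_kind fuel u v = Some (cu, cv) ->
  forall s t, peq (u ++ s) (v ++ t) -> size (u ++ s) <= m ->
  exists r, peq s (cu ++ r) /\ peq t (cv ++ r).
Proof.
elim: fuel u v cu cv => [|fuel IH] [|x u'] [|y v'] cu cv //=.
- by move=> [<- <-] s t st _; exists t.
- by move=> [<- <-] s t st _; exists t.
- by move=> [<- <-] s t st _; exists s; split => //; symmetry.
case E1: (reversing _ fuel u' (bcpl x y)) => [[a1 b1]|] //.
case E2: (reversing _ fuel v' (bcpl y x)) => [[a2 b2]|] //.
case E3: (reversing _ fuel b1 b2) => [[a3 b3]|] // [<- <-] s t st lt_m.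
have [k [k1 k2]] := gen_lcm_lt lt_m erefl st.
have [r1 [s_r1 k_r1]] := IH _ _ _ _ E1 _ _ k1 (ltnW lt_m).
have le_vt : size (v' ++ t) <= m by move: (pconv_size st) lt_m => /= [<-]; apply: ltnW.
have [r2 [t_r2 k_r2]] := IH _ _ _ _ E2 _ _ k2 le_vt.
have b1_b2 : peq (b1 ++ r1) (b2 ++ r2) by rewrite -k_r1 -k_r2.
have le_b1 : size (b1 ++ r1) <= m.
  rewrite -(pconv_size k_r1); apply: leq_trans (ltnW lt_m).
  by rewrite (pconv_size k1) size_cat leq_addl.
have [r [r1_r r2_r]] := IH _ _ _ _ E3 _ _ b1_b2 le_b1.
by exists r; rewrite s_r1 t_r2 r1_r r2_r !catA.
Qed.

Lemma gen_lcm_front x y z a c e : y != z -> size (bcpl y z ++ e) = m ->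
  peq a (bcpl x y ++ c) -> peq (bcpl y z ++ e) (bcpl y x ++ c) ->
  exists c', peq a (bcpl x z ++ c') /\ peq (bcpl z y ++ e) (bcpl z x ++ c').
Proof.
move=> yz; case: (x =P y) => [<- _ ac ec|/eqP xy].
  by exists e; split => //; rewrite ac ec.
case: (x =P z) => [<- size_m ac ec|/eqP xz size_m ac ec].
  exists a; rewrite bcpl_id; split => //.
  by rewrite ac (lcancel_le (eq_leq size_m) ec).
have [cu [cv [W [rev_yzx cube_l cube_r]]]] := cube_condition xy yz xz.
have [r [e_r c_r]] := reversing_sound rev_yzx ec (eq_leq size_m).
by exists (W ++ r); rewrite ac e_r c_r !catA cube_l cube_r.
Qed.

Lemma gen_lcm_inv_step x a w1 w2 : pstep braid_kind w1 w2 -> size w1 = m.+1 ->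
  gen_lcm_inv x a w1 -> gen_lcm_inv x a w2.
Proof.
move=> [[|y p] [l [r [s [-> -> lr]]]]] /= size_w1 inv1 y2 b2; last first.
  move=> [<- <-]; have [c [ac bc]] := inv1 y (p ++ l ++ s) erefl.
  by exists c; split => //; rewrite -bc; apply/pconv_rel/(prel_sym braid_kindC).
case: lr size_w1 inv1 => y z k_yz /= [size_s] inv1 [<- <-].
- have [c [ac bc]] := inv1 y (z :: s) erefl.
  have k_zy : braid_kind z y = 2 by rewrite braid_kindC.
  have := @gen_lcm_front x y z a c s; rewrite (bcpl_comm k_yz) (bcpl_comm k_zy); apply => //.
  by rewrite -braid_kind_eq0 k_yz.
- have [c [ac bc]] := inv1 y [:: z, y & s] erefl.
  have k_zy : braid_kind z y = 1 by rewrite braid_kindC.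
  have := @gen_lcm_front x y z a c s; rewrite (bcpl_braid k_yz) (bcpl_braid k_zy); apply => //.
  by rewrite -braid_kind_eq0 k_yz.
Qed.

Lemma gen_lcm_step : gen_lcm_at m.
Proof.
move=> x y a b size_a xa_yb.
suff inv_end : gen_lcm_inv x a (y :: b) by apply: inv_end.
have : size (x :: a) = m.+1 by rewrite /= size_a.
have : gen_lcm_inv x a (x :: a) by move=> _ _ [<- <-]; exists a; rewrite bcpl_id.
elim: xa_yb => // w1 w2 w3 step12 _ IH inv1 size_w1.
apply: IH; first exact: gen_lcm_inv_step step12 size_w1 inv1.
by rewrite -(pconv_size (pconv1 step12)).
Qed.

End GenLcmInduction.

Lemma peq_cons_lcm x y a b : peq (x :: a) (y :: b) ->
  exists c, peq a (bcpl x y ++ c) /\ peq b (bcpl y x ++ c).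
Proof. by apply: (ltn_ind gen_lcm_step). Qed.

Lemma peq_lcancel p e c : peq (p ++ e) (p ++ c) -> peq e c.
Proof. by apply: lcancel_le (leqnn _) => m' _; apply: (ltn_ind gen_lcm_step). Qed.

Lemma peq_rcancel p e c : peq (e ++ p) (c ++ p) -> peq e c.
Proof.
move=> /(pconv_rev braid_kindC); rewrite !rev_cat => /peq_lcancel.
by move=> /(pconv_rev braid_kindC); rewrite !revK.
Qed.

(** * Least common multiples and roots *)

Definition ldivides u w := exists x, peq w (u ++ x).

Add Parametric Morphism : ldivides with signature peq ==> peq ==> iff as ldivides_peq.
Proof.
move=> u u' uu' w w' ww'; split=> [[x wx]|[x wx]]; exists x.
  by rewrite -ww' wx uu'.
by rewrite ww' wx uu'.
Qed.

Lemma ldivides_cat u x : ldivides u (u ++ x).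
Proof. by exists x. Qed.

Lemma ldivides_trans u v w : ldivides u v -> ldivides v w -> ldivides u w.
Proof. by move=> [x ->] [y ->]; exists (x ++ y); rewrite catA. Qed.

Definition lcm_pair u v cu cv :=
  peq (u ++ cu) (v ++ cv) /\
  forall s t, peq (u ++ s) (v ++ t) -> exists r, peq s (cu ++ r) /\ peq t (cv ++ r).

Lemma lcm_pair_cons x y u v a1 b1 a2 b2 a3 b3 :
  lcm_pair u (bcpl x y) a1 b1 -> lcm_pair v (bcpl y x) a2 b2 -> lcm_pair b1 b2 a3 b3 ->
  lcm_pair (x :: u) (y :: v) (a1 ++ a3) (a2 ++ b3).
Proof.
move=> [C1 U1] [C2 U2] [C3 U3]; split => /=.
  transitivity (x :: bcpl x y ++ b1 ++ a3); first by rewrite catA C1 -catA.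
  transitivity (y :: bcpl y x ++ b2 ++ b3); last by rewrite catA -C2 -catA.
  by rewrite C3 -!cat_cons !catA peq_lcm_gen.
move=> s t /peq_cons_lcm[k [/U1[q1 [s_q1 k_q1]] /U2[q2 [t_q2 k_q2]]]].
have [r [q1_r q2_r]] : exists r, peq q1 (a3 ++ r) /\ peq q2 (b3 ++ r).
  by apply: U3; rewrite -k_q1 -k_q2.
by exists r; rewrite s_q1 t_q2 q1_r q2_r !catA.
Qed.

Lemma lcm_pair_nil v : lcm_pair [::] v v [::].
Proof. by split => [|s t st]; [rewrite cats0 | exists t]. Qed.

Lemma lcm_pairC u v cu cv : lcm_pair u v cu cv -> lcm_pair v u cv cu.
Proof.
move=> [C U]; split => [|s t /peq_sym /U [r [tr sr]]]; first by symmetry.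
by exists r.
Qed.

Lemma lcm_pair_exists u v s t : peq (u ++ s) (v ++ t) -> exists cu cv, lcm_pair u v cu cv.
Proof.
move: {2}(size (u ++ s)) (leqnn (size (u ++ s))) => l.
elim: l u v s t => [|l IH] [|x u] v s t //= size_l us_vt;
  try by exists v, [::]; apply: lcm_pair_nil.
case: v us_vt => [|y v] us_vt; first by exists [::], (x :: u); apply/lcm_pairC/lcm_pair_nil.
rewrite ltnS in size_l; have [k [k1 k2]] := peq_cons_lcm us_vt.
have [a1 [b1 [C1 U1]]] := IH _ _ _ _ size_l k1.
have le_vt : size (v ++ t) <= l by move: (pconv_size us_vt) size_l => /= [<-].
have [a2 [b2 [C2 U2]]] := IH _ _ _ _ le_vt k2.
have [r1 [_ k_r1]] := U1 _ _ k1.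
have [r2 [_ k_r2]] := U2 _ _ k2.
have b1_b2 : peq (b1 ++ r1) (b2 ++ r2) by rewrite -k_r1 -k_r2.
have le_b1 : size (b1 ++ r1) <= l.
  rewrite -(pconv_size k_r1); apply: leq_trans size_l.
  by rewrite (pconv_size k1) size_cat leq_addl.
have [a3 [b3 P3]] := IH _ _ _ _ le_b1 b1_b2.
by exists (a1 ++ a3), (a2 ++ b3); apply: lcm_pair_cons P3.
Qed.

Definition is_lcm (S : pword -> Prop) c :=
  (forall s, S s -> ldivides s c) /\ (forall d, (forall s, S s -> ldivides s d) -> ldivides c d).

Lemma lcm_unique S c c' : is_lcm S c -> is_lcm S c' -> peq c c'.
Proof.
move=> [Sc c_min] [Sc' c'_min].
have [x c'x] := c'_min c Sc; have [y cy] := c_min c' Sc'.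
have : peq (c ++ [::]) (c ++ y ++ x) by rewrite cats0 catA -cy -c'x.
move=> /pconv_size /eqP; rewrite !size_cat addn0 -{1}[size c]addn0 eqn_add2l eq_sym.
by rewrite addn_eq0 !size_eq0 => /andP[/eqP y0 _]; rewrite cy y0 cats0.
Qed.

Lemma lcm_ext S S' c :
  (forall w, S w -> exists2 w', S' w' & peq w w') ->
  (forall w', S' w' -> exists2 w, S w & peq w w') ->
  is_lcm S c -> is_lcm S' c.
Proof.
move=> SS' S'S [Sc c_min]; split; first by move=> w' /S'S [w /Sc wc <-].
by move=> d S'd; apply: c_min => w /SS' [w' /S'd w'd ->].
Qed.

Lemma lcm_lmul S c p : is_lcm S c -> (exists s, S s) ->
  is_lcm (fun w => exists2 s, S s & w = p ++ s) (p ++ c).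
Proof.
move=> [Sc c_min] [s0 Ss0]; split.
  by move=> w [s /Sc [x ->] ->]; exists x; rewrite catA.
move=> d pS_d; have [x0 d_x0] := pS_d _ (ex_intro2 _ _ s0 Ss0 erefl).
suff [y s0x0_y] : ldivides c (s0 ++ x0) by exists y; rewrite d_x0 -catA s0x0_y catA.
apply: c_min => s Ss; have [z d_z] := pS_d _ (ex_intro2 _ _ s Ss erefl).
by exists z; apply: (@peq_lcancel p); rewrite catA -d_x0 d_z catA.
Qed.

Lemma lcm_finite (q : nat -> pword) M j : (forall i, i < j -> ldivides (q i) M) ->
  exists c, is_lcm (fun w => exists2 i, i < j & w = q i) c.
Proof.
elim: j => [|j IH] qM.
  by exists [::]; split => [s []|d _] //; exists d.
have [c [Sc c_min]] := IH (fun i lt_ij => qM i (ltnW lt_ij)).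
have [s Ms] : ldivides c M by apply: c_min => _ [i lt_ij ->]; apply/qM/ltnW.
have [t Mt] := qM j (ltnSn j).
have [cu [cv [C U]]] : exists cu cv, lcm_pair c (q j) cu cv.
  by apply: lcm_pair_exists (s) (t) _; rewrite -Ms -Mt.
exists (c ++ cu); split.
  move=> w [i]; rewrite ltnS leq_eqVlt => /orP[/eqP-> ->|lt_ij ->].
    by exists cv; rewrite C.
  by apply: ldivides_trans (Sc _ (ex_intro2 _ _ i lt_ij erefl)) (ldivides_cat _ _).
move=> d Sd.
have [s' ds'] : ldivides c d.
  by apply: c_min => _ [i lt_ij ->]; apply/Sd; exists i => //; apply: ltnW.
have [t' dt'] := Sd (q j) (ex_intro2 _ _ j (ltnSn j) erefl).
have [r [s'r _]] := U s' t' (peq_trans (peq_sym ds') dt').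
by exists r; rewrite ds' s'r catA.
Qed.

Definition wexp (T : Type) (w : seq T) (k : nat) : seq T := flatten (nseq k w).

Lemma wexpS (T : Type) (w : seq T) k : wexp w k.+1 = w ++ wexp w k.
Proof. by []. Qed.

Lemma wexpD (T : Type) (w : seq T) a b : wexp w (a + b) = wexp w a ++ wexp w b.
Proof. by rewrite /wexp nseqD flatten_cat. Qed.

Lemma all_wexp (T : Type) (P : pred T) w k : all P w -> all P (wexp w k).
Proof. by move=> w_P; elim: k => //= k IH; rewrite all_cat w_P. Qed.

Lemma size_wexp (T : Type) (w : seq T) k : size (wexp w k) = k * size w.
Proof. by elim: k => //= k IH; rewrite size_cat IH mulSn. Qed.

Lemma wexpM (T : Type) (w : seq T) a b : wexp w (a * b) = wexp (wexp w b) a.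
Proof. by elim: a => //= a IH; rewrite mulSn wexpD IH. Qed.

Lemma peq_wexp_comm d p i : peq (d ++ p) (p ++ d) -> peq (d ++ wexp p i) (wexp p i ++ d).
Proof.
move=> dp_pd; elim: i => [|i IH]; first by rewrite cats0.
by rewrite wexpS catA dp_pd -catA IH catA.
Qed.

Section PowerRoots.
Variables (p d : pword) (K : nat).
Hypotheses (K_gt0 : 0 < K) (dp_pd : peq (d ++ p) (p ++ d)).
Hypothesis pK_dK : peq (wexp p K) (wexp d K).

Let q i := wexp p i ++ wexp d (K - i).

Lemma mixed_pow_shift i : i < K -> peq (p ++ q i) (d ++ q i.+1).
Proof.
move=> lt_iK; have -> : p ++ q i = wexp p i.+1 ++ d ++ wexp d (K - i.+1).
  by rewrite /q -(subnSK lt_iK) catA.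
by rewrite catA -(peq_wexp_comm i.+1 dp_pd) -catA.
Qed.

Lemma mixed_pow_wrap : peq (q K) (q 0).
Proof. by rewrite /q subnn subn0 cats0. Qed.

Lemma pow_root_unique M : (forall i, i <= K -> ldivides (q i) M) -> peq p d.
Proof.
move=> qM.
have [c lcm_c] := lcm_finite (fun i lt_iK => qM i (ltnW lt_iK)).
have inhabited : exists s, exists2 i, i < K & s = q i by exists (q 0), 0.
apply: (@peq_rcancel c); apply: lcm_unique (lcm_lmul p lcm_c inhabited) _.
have inS r i : i < K -> exists2 s, (exists2 j, j < K & s = q j) & r ++ q i = r ++ s.
  by move=> lt_iK; exists (q i); first exists i.
apply: lcm_ext (lcm_lmul d lcm_c inhabited).
  move=> _ [_ [[|i] lt_iK ->] ->].
    exists (p ++ q K.-1); first by apply: inS; rewrite ltn_predL.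
    have := mixed_pow_shift (i := K.-1); rewrite prednK // => /(_ (leqnn K)) ->.
    by rewrite mixed_pow_wrap.
  exists (p ++ q i); first by apply: inS; apply: ltnW.
  exact: peq_sym (mixed_pow_shift (ltnW lt_iK)).
move=> _ [_ [i lt_iK ->] ->].
have := lt_iK; rewrite leq_eqVlt => /orP[/eqP eq_i1K | lt_i1K].
  exists (d ++ q 0); first exact: inS.
  by apply/peq_sym/(peq_trans (mixed_pow_shift lt_iK)); rewrite eq_i1K mixed_pow_wrap.
by exists (d ++ q i.+1); [apply: inS | exact: peq_sym (mixed_pow_shift lt_iK)].
Qed.

End PowerRoots.

(** * The fundamental braid *)

Definition shift (w : pword) : pword := map succn w.

Add Parametric Morphism : shift with signature peq ==> peq as peq_shift.
Proof. by move=> u v; apply: (@pconv_map _ _ succn) => a b; rewrite /braid_kind !eqSS. Qed.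

Lemma shift_gen n w : all (gen_ok n) w -> all (gen_ok n.+1) (shift w).
Proof.
move=> w_ok; rewrite all_map; apply: sub_all w_ok => a /andP[_ lt_an].
by rewrite /= /gen_ok ltnS.
Qed.

Fixpoint desc n : pword := if n is n'.+1 then n :: desc n' else [::].

Fixpoint delta n : pword := if n is n'.+1 then delta n' ++ desc n' else [::].

Lemma desc_gen n : all (gen_ok n.+1) (desc n).
Proof.
elim: n => //= n IH; rewrite {1}/gen_ok ltnSn.
by apply: sub_all IH => a /andP[a_gt0 lt_an]; rewrite /gen_ok a_gt0 ltnS ltnW.
Qed.

Lemma delta_gen n : all (gen_ok n) (delta n).
Proof.
elim: n => //= n IH; rewrite all_cat desc_gen andbT.
by apply: sub_all IH => a /andP[a_gt0 lt_an]; rewrite /gen_ok a_gt0 ltnW.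
Qed.

Lemma desc_distant n : all (distant n.+2) (desc n).
Proof. by apply: sub_all (desc_gen n) => b /andP[_]; rewrite /distant; lia. Qed.

Lemma desc_conj n i : gen_ok n i -> peq (i :: desc n) (desc n ++ [:: i.+1]).
Proof.
elim: n i => [|n IH] i /andP[i_gt0 lt_in] //=.
case: (ltnP i n) => [lt_in'|le_ni].
  have i_ok : gen_ok n i by rewrite /gen_ok i_gt0.
  rewrite -[[:: i, n.+1 & _]]/([:: i; n.+1] ++ desc n) peq_comm; last by rewrite /distant; lia.
  by rewrite /= (IH i i_ok).
have {le_ni lt_in} i_n : i = n by lia.
subst i; case: n i_gt0 {IH} => // m _ /=.
rewrite -[[:: m.+1, m.+2, m.+1 & _]]/([:: m.+1; m.+2; m.+1] ++ desc m) peq_braid /=.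
by rewrite (peq_comm_distant (desc_distant m)).
Qed.

Lemma desc_conj_word n w : all (gen_ok n) w -> peq (w ++ desc n) (desc n ++ shift w).
Proof.
elim: w => [|a w IH] /=; first by rewrite cats0.
by move=> /andP[a_ok /IH w_desc]; rewrite w_desc -cat_cons desc_conj // -catA.
Qed.

Lemma delta_succ n : peq (delta n.+1) (desc n ++ shift (delta n)).
Proof.
elim: n => // n IH.
have shift_ok : all (gen_ok n.+1) (shift (delta n)) by apply/shift_gen/delta_gen.
rewrite -[delta n.+2]/(delta n.+1 ++ desc n.+1) IH -catA (desc_conj_word shift_ok) catA.
by rewrite (desc_conj_word (desc_gen n)) /shift map_cat catA.
Qed.

Lemma delta_succ2 n : peq (delta n.+2) (desc n ++ desc n.+1 ++ shift (shift (delta n))).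
Proof.
have shift_ok : all (gen_ok n.+1) (shift (delta n)) by apply/shift_gen/delta_gen.
by rewrite -[delta n.+2]/(delta n.+1 ++ desc n.+1) delta_succ -catA (desc_conj_word shift_ok).
Qed.

Lemma desc_pair_one n : peq (desc n ++ desc n.+1 ++ [:: 1]) (n.+1 :: desc n ++ desc n.+1).
Proof.
elim: n => // n IH.
transitivity (n.+1 :: n.+2 :: desc n ++ desc n.+1 ++ [:: 1]).
  have -> : desc n.+1 ++ desc n.+2 ++ [:: 1] =
      n.+1 :: (desc n ++ [:: n.+2]) ++ desc n.+1 ++ [:: 1] by rewrite -catA.
  by rewrite -(peq_comm_distant (desc_distant n)).
rewrite IH -[[:: n.+1, n.+2, n.+1 & _]]/([:: n.+1; n.+2; n.+1] ++ desc n ++ desc n.+1).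
by rewrite peq_braid /= -cat_cons (peq_comm_distant (desc_distant n)) -catA.
Qed.

Lemma delta_flip n i : gen_ok n i -> peq (delta n ++ [:: i]) ((n - i) :: delta n).
Proof.
elim: n i => [|n IH] i /andP[i_gt0 lt_in] //.
case: (ltnP 1 i) => [lt_1i|le_i1].
  have im1_ok : gen_ok n i.-1 by rewrite /gen_ok; lia.
  rewrite -[delta n.+1]/(delta n ++ desc n) -catA -{1}(prednK i_gt0) -(desc_conj im1_ok).
  rewrite -cat1s catA (IH _ im1_ok) /=.
  by have -> : n - i.-1 = n.+1 - i by lia.
have {le_i1 i_gt0} i1 : i = 1 by lia.
subst i; case: n {IH} lt_in => // k _.
set SS := shift (shift (delta k)).
have far_1 : all (distant 1) SS.
  by rewrite !all_map; apply: sub_all (delta_gen k) => b /andP[b_gt0 _]; rewrite /distant /=; lia.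
rewrite delta_succ2 -!catA -(peq_comm_distant far_1).
transitivity ((desc k ++ desc k.+1 ++ [:: 1]) ++ SS); first by rewrite -!catA.
by rewrite desc_pair_one subn1 /= -!catA.
Qed.

Fixpoint delta_quot n i : pword :=
  if n is n'.+1 then
    if i < n' then delta_quot n' i ++ desc n' else desc n'.-1 ++ shift (delta n')
  else [::].

Lemma delta_quotP n i : gen_ok n i -> peq (i :: delta_quot n i) (delta n).
Proof.
elim: n i => [|n IH] i /andP[i_gt0 lt_in] //=.
case: ifP => [lt_in'|/negbT]; first by rewrite -cat_cons IH // /gen_ok i_gt0.
rewrite -leqNgt => le_ni; have {le_ni lt_in} i_n : i = n by lia.
subst i; case: n i_gt0 {IH} => // n _.
exact: peq_sym (delta_succ n.+1).
Qed.

Definition delta2 n : pword := delta n ++ delta n.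

Lemma delta2_gen n : all (gen_ok n) (delta2 n).
Proof. by rewrite all_cat delta_gen. Qed.

Lemma delta2_comm_gen n i : gen_ok n i -> peq (delta2 n ++ [:: i]) (i :: delta2 n).
Proof.
move=> i_ok; have ni_ok : gen_ok n (n - i) by move: i_ok; rewrite /gen_ok; lia.
rewrite /delta2 -catA (delta_flip i_ok) -cat1s catA (delta_flip ni_ok).
by rewrite subKn // ltnW //; case/andP: i_ok.
Qed.

Lemma delta2_comm n w : all (gen_ok n) w -> peq (delta2 n ++ w) (w ++ delta2 n).
Proof.
elim: w => [|i w IH] /=; first by rewrite cats0.
move=> /andP[i_ok /IH w_comm]; rewrite -cat1s catA (delta2_comm_gen i_ok).
by rewrite /= w_comm.
Qed.

(* sigma_i^-1 Delta^2, a positive word. *)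
Definition delta2_quot n i : pword := delta_quot n i ++ delta n.

Lemma gen_delta2_quot n i : gen_ok n i -> peq (i :: delta2_quot n i) (delta2 n).
Proof. by move=> i_ok; rewrite -cat_cons delta_quotP. Qed.

Lemma delta2_quot_gen n i : gen_ok n i -> peq (delta2_quot n i ++ [:: i]) (delta2 n).
Proof.
move=> i_ok; apply: (@peq_lcancel [:: i]).
rewrite catA -[[:: i] ++ _]/(i :: delta2_quot n i) (gen_delta2_quot i_ok).
exact: delta2_comm_gen.
Qed.

Lemma delta2_quot_ok n i : gen_ok n i -> all (gen_ok n) (delta2_quot n i).
Proof.
move=> i_ok; have := pconv_all (gen_ok n) (gen_delta2_quot i_ok).
by rewrite delta2_gen /= i_ok.
Qed.

Lemma ldivides_delta2_wexp n w : all (gen_ok n) w -> ldivides w (wexp (delta2 n) (size w)).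
Proof.
elim: w => [|i w IH] /=; first by exists [::].
move=> /andP[i_ok /IH [x w_x]]; exists (x ++ delta2_quot n i).
have q_comm : peq (delta2_quot n i ++ delta2 n) (delta2 n ++ delta2_quot n i).
  by symmetry; apply/delta2_comm/delta2_quot_ok.
rewrite wexpS -{1}(gen_delta2_quot i_ok) /= (peq_wexp_comm _ q_comm) w_x.
by rewrite -!catA.
Qed.

Lemma ldivides_wexp_mono w d a b : ldivides w (wexp d a) -> a <= b -> ldivides w (wexp d b).
Proof.
move=> [x d_x] le_ab; exists (x ++ wexp d (b - a)).
by rewrite -{1}(subnKC le_ab) wexpD d_x -catA.
Qed.

Lemma delta2_wexp_comm n k w : all (gen_ok n) w ->
  peq (wexp (delta2 n) k ++ w) (w ++ wexp (delta2 n) k).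
Proof. by move=> w_ok; symmetry; apply/peq_wexp_comm/peq_sym/delta2_comm. Qed.

(** * Braid words as fractions of positive words *)

Add Parametric Relation n : bword (braid_eq n)
  reflexivity proved by (@beq_refl n)
  symmetry proved by (@beq_sym n)
  transitivity proved by (@beq_trans n) as braid_eq_rel.
#[local] Hint Resolve beq_refl : core.

Lemma braid_eq_ctx n x y u v : braid_eq n u v -> braid_eq n (x ++ u ++ y) (x ++ v ++ y).
Proof.
elim=> {u v} [u' l r v' lr|w|w1 w2 _ IH|w1 w2 w3 _ IH1 _ IH2].
- by have := beq_rel (x ++ u') (v' ++ y) lr; rewrite !catA.
- reflexivity.
- by symmetry.
- by rewrite IH1.
Qed.

Add Parametric Morphism n : (@cat letter) with signature
  braid_eq n ==> braid_eq n ==> braid_eq n as braid_eq_cat.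
Proof.
move=> x y xy u v uv; transitivity (y ++ u); first exact: (braid_eq_ctx [::] u xy).
by have := braid_eq_ctx y [::] uv; rewrite !cats0.
Qed.

Add Parametric Morphism n (a : letter) : (cons a) with signature
  braid_eq n ==> braid_eq n as braid_eq_cons.
Proof. by move=> x y xy; have := braid_eq_ctx [:: a] [::] xy; rewrite !cats0. Qed.

Lemma braid_rel_ok n l r : braid_rel n l r -> word_ok n l && word_ok n r.
Proof. by case=> [i b|i j|i j] /=; rewrite /sig /= => -> // ->. Qed.

Lemma braid_eq_ok n u v : braid_eq n u v -> word_ok n u = word_ok n v.
Proof.
elim=> // [u' l r v' /braid_rel_ok /andP[l_ok r_ok]|w1 w2 w3 _ -> _ -> //].
by rewrite /word_ok !all_cat -!/(word_ok n _) l_ok r_ok.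
Qed.

Lemma braid_eq_inv n i b : gen_ok n i -> braid_eq n [:: (i, b); (i, ~~ b)] [::].
Proof. by move=> i_ok; have := beq_rel [::] [::] (rel_cancel b i_ok). Qed.

Lemma braid_eq_comm_inv n u i : gen_ok n i ->
  braid_eq n (u ++ [:: sig i]) (sig i :: u) ->
  braid_eq n (u ++ [:: (i, false)]) ((i, false) :: u).
Proof.
move=> i_ok comm.
have inv_l : braid_eq n [:: (i, false); sig i] [::] := braid_eq_inv false i_ok.
have inv_r : braid_eq n [:: sig i; (i, false)] [::] := braid_eq_inv true i_ok.
transitivity ([:: (i, false); sig i] ++ u ++ [:: (i, false)]); first by rewrite inv_l.
have -> : [:: (i, false); sig i] ++ u ++ [:: (i, false)] =
    (i, false) :: (sig i :: u) ++ [:: (i, false)] by [].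
rewrite -comm -catA.
have -> : [:: sig i] ++ [:: (i, false)] = [:: sig i; (i, false)] by [].
by rewrite inv_r cats0.
Qed.

Lemma all_winv (P : pred letter) w : all P (winv w) = all (fun a => P (a.1, ~~ a.2)) w.
Proof. by rewrite /winv all_rev all_map. Qed.

Lemma winv_ok n w : word_ok n (winv w) = word_ok n w.
Proof. exact: all_winv. Qed.

Lemma winvK w : winv (winv w) = w.
Proof.
rewrite /winv map_rev revK -map_comp -[RHS]map_id.
by apply: eq_map => -[i b] /=; rewrite negbK.
Qed.

Lemma winv_l n w : word_ok n w -> braid_eq n (winv w ++ w) [::].
Proof.
elim: w => [|[i b] w IH] //= /andP[i_ok w_ok].
rewrite /winv /= rev_cons -cats1 -/(winv w) -catA.
have -> : [:: (i, ~~ b)] ++ (i, b) :: w = [:: (i, ~~ b); (i, ~~ ~~ b)] ++ w by rewrite negbK.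
by rewrite braid_eq_inv //= IH.
Qed.

Lemma winv_r n w : word_ok n w -> braid_eq n (w ++ winv w) [::].
Proof. by rewrite -winv_ok => /winv_l; rewrite winvK. Qed.

Lemma winv_eq_nil n X : word_ok n X -> braid_eq n (winv X) [::] -> braid_eq n X [::].
Proof.
move=> X_ok X'_nil; transitivity (X ++ winv X); first by rewrite X'_nil cats0.
exact: winv_r.
Qed.

Lemma braid_eq_lcancel n u v w : word_ok n u -> braid_eq n (u ++ v) (u ++ w) -> braid_eq n v w.
Proof.
move=> u_ok uv_uw.
have cancel x : braid_eq n (winv u ++ u ++ x) x by rewrite catA winv_l.
by rewrite -(cancel v) uv_uw cancel.
Qed.

Definition lift (w : pword) : bword := map sig w.

Lemma lift_cat u v : lift (u ++ v) = lift u ++ lift v.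
Proof. exact: map_cat. Qed.

Lemma lift_ok n w : word_ok n (lift w) = all (gen_ok n) w.
Proof. by rewrite /word_ok all_map. Qed.

Lemma lift_peq n u v : peq u v -> all (gen_ok n) u -> braid_eq n (lift u) (lift v).
Proof.
elim=> // {}u {}v w [p [l [r [s [-> -> lr]]]]] _ IH u_ok.
rewrite -IH; last by rewrite -(pconv_all _ (pconv_rel p s lr)).
rewrite !lift_cat; apply: beq_rel.
move: u_ok; rewrite !all_cat => /and3P[_ l_ok _].
case: lr l_ok => a b /eqP => [/[!braid_kind_eq2] ab | /[!braid_kind_eq1] ab] /and3P[a_ok b_ok _].
  by apply: rel_comm.
by apply: rel_braid => //; move: ab; rewrite ![_.+1 == _]eq_sym.
Qed.

(* A braid word [w] is [Delta^-2k * numer n w] in B_n with [k = denom w]: each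
   [sigma_i^-1] is replaced by the positive word [sigma_i^-1 Delta^2]. *)
Definition numer_letter n (a : letter) : pword :=
  if a.2 then [:: a.1] else delta2_quot n a.1.
Definition numer n (w : bword) : pword := flatten (map (numer_letter n) w).
Definition denom (w : bword) : nat := count (fun a => ~~ a.2) w.

Lemma numer_cat n u v : numer n (u ++ v) = numer n u ++ numer n v.
Proof. by rewrite /numer map_cat flatten_cat. Qed.

Lemma denom_cat u v : denom (u ++ v) = denom u + denom v.
Proof. exact: count_cat. Qed.

Lemma numer_wexp n w k : numer n (wexp w k) = wexp (numer n w) k.
Proof. by elim: k => //= k IH; rewrite numer_cat IH. Qed.

Lemma denom_wexp w k : denom (wexp w k) = k * denom w.
Proof. by elim: k => //= k IH; rewrite denom_cat IH mulSn. Qed.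

Lemma numer_ok n w : word_ok n w -> all (gen_ok n) (numer n w).
Proof.
elim: w => [|a w IH] //= /andP[a_ok /IH w_ok].
rewrite -[numer n (a :: w)]/(numer_letter n a ++ numer n w) all_cat w_ok andbT /numer_letter.
by case: ifP => _; [rewrite /= a_ok | exact: delta2_quot_ok].
Qed.

Definition frac_eq n u v :=
  peq (wexp (delta2 n) (denom v) ++ numer n u) (wexp (delta2 n) (denom u) ++ numer n v).

Lemma frac_eq_sym n u v : frac_eq n u v -> frac_eq n v u.
Proof. exact: peq_sym. Qed.

Lemma frac_eq_trans n u v w : frac_eq n u v -> frac_eq n v w -> frac_eq n u w.
Proof.
rewrite /frac_eq => uv vw; apply: (@peq_lcancel (wexp (delta2 n) (denom v))).
rewrite catA -wexpD addnC wexpD -catA uv catA -wexpD addnC wexpD -catA vw.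
by rewrite !catA -!wexpD addnC.
Qed.

Lemma frac_ctx_shape n x y k b : word_ok n x -> all (gen_ok n) b ->
  peq (wexp (delta2 n) (denom x + (k + denom y)) ++ numer n x ++ b ++ numer n y)
      (numer n x ++ (wexp (delta2 n) k ++ b) ++ wexp (delta2 n) (denom x + denom y) ++ numer n y).
Proof.
move=> x_ok b_ok; have nx_ok := numer_ok x_ok.
have nxb_ok : all (gen_ok n) (numer n x ++ b) by rewrite all_cat nx_ok.
rewrite addnCA wexpD -catA.
set Q := wexp (delta2 n) (denom x + denom y).
have -> : Q ++ numer n x ++ b ++ numer n y = (Q ++ numer n x ++ b) ++ numer n y by rewrite !catA.
by rewrite (delta2_wexp_comm _ nxb_ok) -!catA catA (delta2_wexp_comm _ nx_ok) -!catA.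
Qed.

Lemma frac_eq_ctx n x y l r : word_ok n x -> word_ok n l -> word_ok n r ->
  frac_eq n l r -> frac_eq n (x ++ l ++ y) (x ++ r ++ y).
Proof.
rewrite /frac_eq => x_ok l_ok r_ok lr; rewrite !numer_cat !denom_cat.
by rewrite !frac_ctx_shape ?numer_ok // lr.
Qed.

Lemma frac_eq_rel n l r : braid_rel n l r -> frac_eq n l r.
Proof.
rewrite /frac_eq /numer /denom; case=> [i [] i_ok|i j _ _ ij|i j _ _ ij];
  rewrite /= /numer_letter /= ?addn0 ?add0n /wexp /= ?cats0.
- exact: gen_delta2_quot.
- exact: delta2_quot_gen.
- exact: peq_comm.
by case/orP: ij => /eqP->; [exact: peq_braid | exact: peq_sym (peq_braid j)].
Qed.

Lemma braid_eq_frac n u v : braid_eq n u v -> word_ok n u -> frac_eq n u v.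
Proof.
elim=> [u' l r v' lr|w|w1 w2 w12 IH|w1 w2 w3 w12 IH1 _ IH2].
- rewrite /word_ok !all_cat -!/(word_ok n _) => /and3P[u_ok l_ok _].
  have /andP[_ r_ok] := braid_rel_ok lr.
  exact/frac_eq_ctx/frac_eq_rel.
- by move=> _; rewrite /frac_eq.
- by move=> w2_ok; apply/frac_eq_sym/IH; rewrite (braid_eq_ok w12).
- by move=> w1_ok; apply: frac_eq_trans (IH1 w1_ok) (IH2 _); rewrite -(braid_eq_ok w12).
Qed.

Lemma lift_delta2_wexp_comm n k w : word_ok n w ->
  braid_eq n (lift (wexp (delta2 n) k) ++ w) (w ++ lift (wexp (delta2 n) k)).
Proof.
set L := lift _; elim: w => [|[i b] w IH] /=; first by rewrite cats0.
move=> /andP[i_ok /IH w_comm].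
have i1_ok : all (gen_ok n) [:: i] by rewrite /= i_ok.
have pos : braid_eq n (L ++ [:: sig i]) (sig i :: L).
  have := lift_peq (delta2_wexp_comm k i1_ok); rewrite !lift_cat; apply.
  by rewrite all_cat all_wexp ?delta2_gen.
have letter : braid_eq n (L ++ [:: (i, b)]) ((i, b) :: L).
  by case: b; [exact: pos | exact: braid_eq_comm_inv].
by rewrite -cat1s catA letter cat_cons w_comm.
Qed.

Lemma numer_letterP n a : gen_ok n a.1 ->
  braid_eq n (lift (wexp (delta2 n) (~~ a.2)) ++ [:: a]) (lift (numer_letter n a)).
Proof.
case: a => i [] /= i_ok; rewrite /numer_letter //= /wexp /= cats0.
have := lift_peq (peq_sym (delta2_quot_gen i_ok)) (delta2_gen n).
rewrite lift_cat => ->; rewrite -catA.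
have inv_r : braid_eq n [:: sig i; (i, false)] [::] := braid_eq_inv true i_ok.
by rewrite /= inv_r cats0.
Qed.

Lemma braid_eq_numer n w : word_ok n w ->
  braid_eq n (lift (wexp (delta2 n) (denom w)) ++ w) (lift (numer n w)).
Proof.
elim: w => [|a w IH] // /andP[a_ok w_ok].
have a1_ok : word_ok n [:: a] by rewrite /word_ok /= a_ok.
rewrite -[denom _]/(~~ a.2 + denom w) -[numer n _]/(numer_letter n a ++ numer n w).
rewrite wexpD !lift_cat -catA -cat1s (catA (lift (wexp _ (denom w)))).
rewrite (lift_delta2_wexp_comm _ a1_ok) -catA catA (numer_letterP a_ok).
by rewrite (IH w_ok).
Qed.

Lemma wexp_eq_nil n Y K : word_ok n Y -> 0 < K ->
  braid_eq n (wexp Y K) [::] -> braid_eq n Y [::].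
Proof.
move=> Y_ok K_gt0 YK_nil.
set p := numer n Y; set d := wexp (delta2 n) (denom Y).
have p_ok : all (gen_ok n) p := numer_ok Y_ok.
have d_ok : all (gen_ok n) d := all_wexp _ (delta2_gen n).
have pK_dK : peq (wexp p K) (wexp d K).
  have := braid_eq_frac YK_nil (all_wexp K Y_ok).
  by rewrite /frac_eq numer_wexp denom_wexp /= cats0 wexpM.
have p_d : peq p d.
  apply: (pow_root_unique K_gt0 (delta2_wexp_comm _ p_ok) pK_dK) => i le_iK.
  apply: (@ldivides_wexp_mono _ _ _ (K * size p + K * size d)).
    by apply: (@ldivides_delta2_wexp n); rewrite all_cat (all_wexp _ p_ok) (all_wexp _ d_ok).
  by rewrite size_cat !size_wexp leq_add // leq_mul // leq_subr.
apply: (@braid_eq_lcancel n (lift d)); first by rewrite lift_ok.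
by rewrite braid_eq_numer // cats0 (lift_peq p_d p_ok).
Qed.

(** * Crossings of coloured strands *)

Section Crossings.
Import GRing.Theory Num.Theory.
Local Open Scope ring_scope.

Definition sgn (b : bool) : int := if b then 1 else -1.

Definition swap_at (c : nat -> bool) i : nat -> bool :=
  fun p => if p == i then c i.+1 else if p == i.+1 then c i else c p.

(* [c p] is the colour of the strand at position [p]; [cross_count c w] counts
   with signs the crossings in [w] of strands of different colours, and
   [recolour c w] is the colouring after [w]. *)
Definition crossing (c : nat -> bool) (a : letter) : int :=
  if c a.1 != c a.1.+1 then sgn a.2 else 0.

Fixpoint cross_count c (w : bword) : int :=
  if w is a :: w' then crossing c a + cross_count (swap_at c a.1) w' else 0.

Fixpoint recolour c (w : bword) : nat -> bool :=
  if w is a :: w' then recolour (swap_at c a.1) w' else c.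

Lemma cross_count_cat c u v :
  cross_count c (u ++ v) = cross_count c u + cross_count (recolour c u) v.
Proof. by elim: u c => [|a u IH] c /=; [rewrite add0r | rewrite IH addrA]. Qed.

Lemma recolour_cat c u v : recolour c (u ++ v) = recolour (recolour c u) v.
Proof. by elim: u c => /=. Qed.

Lemma swap_atK c i : swap_at (swap_at c i) i = c.
Proof.
apply: functional_extensionality => p; rewrite /swap_at.
by repeat (case: eqP => [?|?]; subst => //=); lia.
Qed.

Lemma swap_atC c i j : distant i j -> swap_at (swap_at c i) j = swap_at (swap_at c j) i.
Proof.
rewrite /distant => ij; apply: functional_extensionality => p; rewrite /swap_at.
by repeat (case: eqP => [?|?]; subst => //=); lia.
Qed.

Lemma distant_neq a b : distant a b ->
  [/\ (a == b) = false, (a == b.+1) = false, (a.+1 == b) = false & (a.+1 == b.+1) = false].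
Proof. by rewrite /distant => ab; split; apply/negbTE/eqP; lia. Qed.

Lemma braid_crossings c i :
  cross_count c [:: sig i; sig i.+1; sig i] = cross_count c [:: sig i.+1; sig i; sig i.+1] /\
  recolour c [:: sig i; sig i.+1; sig i] = recolour c [:: sig i.+1; sig i; sig i.+1].
Proof.
split; last first.
  apply: functional_extensionality => p; rewrite /= /swap_at.
  by repeat (case: eqP => [?|?]; subst => //=); lia.
have [E1 E2 E3 E4] : [/\ (i.+1 == i) = false, (i == i.+1) = false, (i.+2 == i) = false
  & (i == i.+2) = false] by split; apply/negbTE/eqP; lia.
rewrite /= /crossing /swap_at /= !eqxx !eqSS E1 E2 E3 E4 /=.
by case: (c i); case: (c i.+1); case: (c i.+2).
Qed.

Lemma braid_rel_crossings n c l r : braid_rel n l r ->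
  cross_count c l = cross_count c r /\ recolour c l = recolour c r.
Proof.
case=> [i b _|i j _ _ ij|i j _ _ /orP[] /eqP->].
- split; last by rewrite /= swap_atK.
  rewrite /= /crossing /swap_at /= !eqxx (gtn_eqF (ltnSn i)) [c i.+1 == _]eq_sym addr0.
  by case: (c i != c i.+1); case: b; rewrite ?addr0.
- split; last by rewrite /= swap_atC.
  have [E1 E2 E3 E4] := distant_neq ij.
  have ji : distant j i by rewrite /distant orbC.
  have [F1 F2 F3 F4] := distant_neq ji.
  by rewrite /= /crossing /swap_at /= E1 E2 E3 E4 F1 F2 F3 F4 !addr0 addrC.
- exact: braid_crossings.
by have [-> ->] := braid_crossings c j.
Qed.

Lemma braid_eq_crossings n u v : braid_eq n u v ->
  forall c, cross_count c u = cross_count c v /\ recolour c u = recolour c v.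
Proof.
elim=> [u' l r v' lr|w|w1 w2 _ IH|w1 w2 w3 _ IH1 _ IH2] c //.
- have [E1 E2] := braid_rel_crossings (recolour c u') lr.
  by rewrite !cross_count_cat !recolour_cat E1 E2.
- by have [-> ->] := IH c.
- by have [-> ->] := IH1 c; have [-> ->] := IH2 c.
Qed.

Lemma swap_at_id c i : c i = c i.+1 -> swap_at c i = c.
Proof.
move=> c_eq; apply: functional_extensionality => p; rewrite /swap_at.
by case: (p =P i) => [->|_] //; case: (p =P i.+1) => [->|_].
Qed.

Lemma cross_count_avoid j w : all (fun a => a.1 != j) w ->
  cross_count (fun p => p <= j)%N w = 0.
Proof.
elim: w => //= a w IH /andP[aj /IH w0].
have split_j : (a.1 <= j)%N = (a.1.+1 <= j)%N by rewrite ltn_neqAle aj.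
by rewrite (@swap_at_id (fun p => p <= j)%N _ split_j) w0 /crossing split_j eqxx addr0.
Qed.

Lemma sgn_neq0 b : sgn b != 0.
Proof. by case: b. Qed.

Lemma crossing_sgn c a : 0 <= sgn a.2 * crossing c a.
Proof. by rewrite /crossing; case: ifP; case: a.2; rewrite ?mulr0. Qed.

Lemma cross_count_sgn c b w : all (fun a => a.2 == b) w -> 0 <= sgn b * cross_count c w.
Proof.
elim: w c => [|a w IH] c /=; first by rewrite mulr0.
move=> /andP[/eqP ab /IH w_ge0]; rewrite mulrDr.
by apply: addr_ge0 => //; rewrite -ab crossing_sgn.
Qed.

Lemma cross_count_uniform c b w : all (fun a => a.2 == b) w -> cross_count c w = 0 ->
  all (fun a => c a.1 == c a.1.+1) w.
Proof.
elim: w c => //= a w IH c /andP[/eqP ab w_b] cnt0.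
have a_ge0 : 0 <= sgn b * crossing c a by rewrite -ab crossing_sgn.
have w_ge0 := cross_count_sgn (swap_at c a.1) w_b.
have /andP[] : (sgn b * crossing c a == 0) && (sgn b * cross_count (swap_at c a.1) w == 0).
  by rewrite -paddr_eq0 // -mulrDr cnt0 mulr0.
rewrite !mulf_eq0 (negbTE (sgn_neq0 b)) /= /crossing.
case: (c a.1 =P c a.1.+1) => [c_eq _|_]; last by rewrite /= (negbTE (sgn_neq0 _)).
by rewrite (swap_at_id c_eq) /= => /eqP /(IH c w_b).
Qed.

End Crossings.

Lemma Delta_pos n : all (fun a => a.2 == true) (Delta n).
Proof. by apply/allP => a /flattenP[s /mapP[j _ ->] /mapP[i _ ->]]. Qed.

Lemma sig_in_Delta n j : gen_ok n j -> sig j \in Delta n.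
Proof.
move=> /andP[j_gt0 lt_jn]; apply/flattenP; exists [seq sig i | i <- rev (iota 1 n.-1)].
  by apply/mapP; exists n.-1 => //; rewrite mem_iota; lia.
by apply/mapP; exists j => //; rewrite mem_rev mem_iota; lia.
Qed.

Lemma wpow_Delta2 n m j : gen_ok n j -> exists b,
  all (fun a => a.2 == b) (wpow (Delta2 n) m) /\ (m != 0 -> (j, b) \in wpow (Delta2 n) m).
Proof.
move=> j_ok; have j_in : sig j \in Delta2 n by rewrite mem_cat sig_in_Delta.
have D2_pos : all (fun a => a.2 == true) (Delta2 n) by rewrite all_cat Delta_pos.
case: m => [[|k]|k]; first by exists true.
  by exists true; split; [exact: (all_wexp k.+1 D2_pos) | rewrite /= mem_cat j_in].
have D2'_neg : all (fun a => a.2 == false) (winv (Delta2 n)).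
  by rewrite all_winv; apply: sub_all D2_pos => -[i []].
exists false; split; first exact: (all_wexp k.+1 D2'_neg).
move=> _; rewrite /= mem_cat; apply/orP; left.
by rewrite /winv mem_rev; apply/mapP; exists (sig j).
Qed.

Lemma wpow_Delta2_avoid n j m w : gen_ok n j -> all (fun a => a.1 != j) w ->
  braid_eq n w (wpow (Delta2 n) m) -> m = 0.
Proof.
move=> j_ok w_avoid w_eq; case: (m =P 0) => // /eqP m_neq0.
have [b [unif /(_ m_neq0) j_in]] := wpow_Delta2 m j_ok.
have [cnt _] := braid_eq_crossings w_eq (fun p => p <= j).
rewrite cross_count_avoid // in cnt.
have := allP (cross_count_uniform unif (esym cnt)) _ j_in.
by rewrite /= leqnn ltnn.
Qed.

Lemma avoiding_power_trivial n j Y K m : gen_ok n j -> word_ok n Y -> 0 < K ->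
  all (fun a => a.1 != j) Y -> braid_eq n (wexp Y K) (wpow (Delta2 n) m) -> braid_eq n Y [::].
Proof.
move=> j_ok Y_ok K_gt0 Y_avoid YK_eq.
have m0 := wpow_Delta2_avoid j_ok (all_wexp K Y_avoid) YK_eq.
by apply: (wexp_eq_nil Y_ok K_gt0); rewrite m0 in YK_eq.
Qed.

Lemma wpow_cases (X : bword) (k : int) : k != 0 ->
  exists2 K, 0 < K & wpow X k = wexp X K \/ wpow X k = wexp (winv X) K.
Proof. by case: k => [[|K]|K] // _; [exists K.+1; [|left] | exists K.+1; [|right]]. Qed.

Lemma missing_generator n (X : bword) :
  size X < n.-1 -> exists2 j, gen_ok n j & all (fun a => a.1 != j) X.
Proof.
move=> X_short; have : ~~ all (mem [seq a.1 | a <- X]) (iota 1 n.-1).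
  apply: contraTN X_short => /allP sub; rewrite -leqNgt.
  by have := uniq_leq_size (iota_uniq 1 n.-1) sub; rewrite size_iota size_map.
rewrite -has_predC => /hasP[j]; rewrite mem_iota => /andP[j_gt0 lt_j] /= j_notin.
exists j; first by rewrite /gen_ok j_gt0; lia.
by apply/allP => a aX; apply: contraNneq j_notin => <-; apply: (map_f _ aX).
Qed.

Theorem lemma18 (n : nat) (X : bword) :
  2 <= n -> word_ok n X -> periodic n X -> ~ braid_eq n X [::] ->
  n.-1 <= size X.
Proof.
move=> _ X_ok [k [m [k_neq0 Xk_eq]]] X_neq1; rewrite leqNgt; apply/negP => X_short.
have [j j_ok X_avoid] := missing_generator X_short.
have [K K_gt0 [XkE|XkE]] := wpow_cases X k_neq0; rewrite XkE in Xk_eq.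
  exact/X_neq1/(avoiding_power_trivial j_ok X_ok K_gt0 X_avoid Xk_eq).
apply/X_neq1/(winv_eq_nil X_ok).
by apply: (avoiding_power_trivial j_ok _ K_gt0 _ Xk_eq); rewrite ?winv_ok ?all_winv.
Qed.
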